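(* Let ${\mathbf{X}}\in\mathbb{R}^{m\times n}$ and suppose ${\mathbf{X}}={\mathbf{U}}_0{\mathbf{V}}_0^T$ with ${\mathbf{U}}_0\in\mathbb{R}_+^{m\times r}$, ${\mathbf{V}}_0\in\mathbb{R}_+^{n\times r}$ both of full column rank $r$, where $r\le\min\{m,n\}$. Let ${\mathbf{A}}_1\in\mathbb{R}^{r\times m}$ and ${\mathbf{A}}_2\in\mathbb{R}^{n\times r}$ be such that the $r\times r$ matrix ${\mathbf{A}}_1{\mathbf{X}}{\mathbf{A}}_2$ is invertible. Let $\lambda_1,\lambda_2>0$ and let $(\tilde{\mathbf{U}},\tilde{\mathbf{V}})$ be any minimizer, over ${\mathbf{U}}\in\mathbb{R}_+^{m\times r}$, ${\mathbf{V}}\in\mathbb{R}_+^{n\times r}$, of $$\|{\mathbf{A}}_1({\mathbf{X}}-{\mathbf{U}}{\mathbf{V}}^T)\|_F^2+\|({\mathbf{X}}-{\mathbf{U}}{\mathbf{V}}^T){\mathbf{A}}_2\|_F^2+\lambda_1\|({\mathbf{I}}_m-\mathbf{P}_1){\mathbf{U}}{\mathbf{V}}^T\|_F^2+\lambda_2\|{\mathbf{U}}{\mathbf{V}}^T({\mathbf{I}}_n-\mathbf{P}_2)\|_F^2,$$ where $\mathbf{P}_1\in\mathbb{R}^{m\times m}$ is the orthogonal projection onto the column space of ${\mathbf{X}}{\mathbf{A}}_2$ and $\mathbf{P}_2\in\mathbb{R}^{n\times n}$ is the orthogonal projection onto the row space of ${\mathbf{A}}_1{\mathbf{X}}$. Then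 ${\mathbf{X}}=\tilde{\mathbf{U}}\tilde{\mathbf{V}}^T$.
   Context: $\mathbb{R}_+^{a\times b}$ denotes the set of $a\times b$ matrices with all entries nonnegative. $\|\cdot\|_F$ is the Frobenius norm. *)

From HB Require Import structures.
From mathcomp Require Import all_boot all_order all_algebra.
From mathcomp Require Import reals.
Set Implicit Arguments. Unset Strict Implicit. Unset Printing Implicit Defensive.
Import Order.TTheory GRing.Theory Num.Theory.
Local Open Scope ring_scope.

Definition nonneg_mx (R : realType) (a b : nat) (M : 'M[R]_(a, b)) : Prop :=
  forall i j, 0 <= M i j.

Definition frob2 (R : realType) (a b : nat) (M : 'M[R]_(a, b)) : R :=
  \sum_(i < a) \sum_(j < b) (M i j) ^+ 2.

(* P is the orthogonal projection (symmetric idempotent) onto the subspace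
   spanned by the rows of S (viewed as vectors in R^a). *)
Definition is_orth_proj (R : realType) (a k : nat) (P : 'M[R]_a) (S : 'M[R]_(k, a)) : Prop :=
  [/\ P^T = P, P *m P = P & (P == S)%MS].

Definition objective (R : realType) (m n r : nat)
  (X : 'M[R]_(m, n)) (A1 : 'M[R]_(r, m)) (A2 : 'M[R]_(n, r))
  (P1 : 'M[R]_m) (P2 : 'M[R]_n) (l1 l2 : R)
  (U : 'M[R]_(m, r)) (V : 'M[R]_(n, r)) : R :=
  frob2 (A1 *m (X - U *m V^T)) + frob2 ((X - U *m V^T) *m A2)
  + l1 * frob2 ((1%:M - P1) *m (U *m V^T))
  + l2 * frob2 ((U *m V^T) *m (1%:M - P2)).

From HB Require Import structures.
From mathcomp Require Import all_boot all_order all_algebra.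
From mathcomp Require Import reals.
From mathcomp Require Import lra.
Set Implicit Arguments. Unset Strict Implicit. Unset Printing Implicit Defensive.
Import Order.TTheory GRing.Theory Num.Theory.
Local Open Scope ring_scope.

(* The objective is a sum of nonnegative terms and vanishes at the feasible
   point (U0, V0), because the rank condition on A1 X A2 forces the row space
   of A1 X and the column space of X A2 to be those of X itself.  Hence a
   minimizer Y = Ut Vt^T has every term equal to zero: Y lies in the row space
   of A1 X, and so does D = X - Y.  Writing D = C A1 X, the equation D A2 = 0
   reads C (A1 X A2) = 0, whence C = 0 and X = Y. *)

Section Frobenius.
Variable R : realType.

Lemma frob2_ge0 a b (M : 'M[R]_(a, b)) : 0 <= frob2 M.
Proof. by apply: sumr_ge0 => i _; apply: sumr_ge0 => j _; apply: sqr_ge0. Qed.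

Lemma frob2_eq0 a b (M : 'M[R]_(a, b)) : frob2 M = 0 -> M = 0.
Proof.
move=> M0; apply/matrixP => i j; rewrite mxE.
have row0 := psumr_eq0P (fun k _ => sumr_ge0 _ (fun l _ => sqr_ge0 _)) M0 (i := i) isT.
have := psumr_eq0P (fun l _ => sqr_ge0 _) row0 (i := j) isT.
by move/eqP; rewrite sqrf_eq0 => /eqP.
Qed.

Lemma frob20 a b : frob2 (0 : 'M[R]_(a, b)) = 0.
Proof. by rewrite /frob2 big1 // => i _; rewrite big1 // => j _; rewrite mxE expr0n. Qed.

End Frobenius.

Section RowSpaces.
Variable F : fieldType.

Lemma submx_mull_rank k m n (A : 'M[F]_(k, m)) (B : 'M[F]_(m, n)) :
  (\rank B <= \rank (A *m B))%N -> (B <= A *m B)%MS.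
Proof.
move=> rkB; suff /eqmxP -> : (A *m B == B)%MS by [].
by rewrite -(mxrank_leqif_eq (submxMl A B)) eqn_leq rkB mxrankM_maxr.
Qed.

Lemma submx_mulmx_unit_eq0 k p n (D : 'M[F]_(p, n)) (B : 'M[F]_(k, n))
    (A : 'M[F]_(n, k)) :
  (D <= B)%MS -> B *m A \in unitmx -> D *m A = 0 -> D = 0.
Proof.
move=> /submxP[C ->] BA_unit; rewrite -mulmxA => CBA0.
by rewrite -(mulmxK BA_unit C) CBA0 !mul0mx.
Qed.

End RowSpaces.

Section OrthogonalProjection.
Variables (R : realType) (a k : nat) (P : 'M[R]_a) (S : 'M[R]_(k, a)).
Hypothesis P_proj : is_orth_proj P S.

Lemma orth_proj_fixr p (M : 'M[R]_(p, a)) : (M <= S)%MS -> M *m P = M.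
Proof.
case: P_proj => _ Pidem PS; rewrite -(eqmxP PS) => /submxP[W ->].
by rewrite -mulmxA Pidem.
Qed.

Lemma orth_proj_fixl p (M : 'M[R]_(a, p)) : (M^T <= S)%MS -> P *m M = M.
Proof.
move/orth_proj_fixr => MP; apply: trmx_inj.
by case: P_proj => Psym _ _; rewrite trmx_mul Psym.
Qed.

Lemma orth_proj_fixrP p (M : 'M[R]_(p, a)) : M *m P = M -> (M <= S)%MS.
Proof. by case: P_proj => _ _ PS MP; rewrite -(eqmxP PS) -MP submxMl. Qed.

End OrthogonalProjection.

Section Objective.
Variables (R : realType) (m n r : nat).
Variables (X : 'M[R]_(m, n)) (A1 : 'M[R]_(r, m)) (A2 : 'M[R]_(n, r)).
Variables (P1 : 'M[R]_m) (P2 : 'M[R]_n) (l1 l2 : R).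
Hypotheses (l1_ge0 : 0 <= l1) (l2_ge0 : 0 <= l2).

Let J := objective X A1 A2 P1 P2 l1 l2.

Lemma objective_ge0 U V : 0 <= J U V.
Proof.
by rewrite /J /objective !addr_ge0 ?mulr_ge0 ?frob2_ge0.
Qed.

Lemma objective_factor_eq0 U V :
  P1 *m X = X -> X *m P2 = X -> U *m V^T = X -> J U V = 0.
Proof.
move=> P1X XP2 UV; rewrite /J /objective UV subrr mulmx0 mul0mx.
by rewrite mulmxBl mulmxBr mul1mx mulmx1 P1X XP2 subrr !frob20 !mulr0 !addr0.
Qed.

Lemma objective_eq0 U V : 0 < l2 -> J U V = 0 ->
  (X - U *m V^T) *m A2 = 0 /\ U *m V^T *m P2 = U *m V^T.
Proof.
move=> l2_gt0 J0; set Y := U *m V^T.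
have := frob2_ge0 (A1 *m (X - Y)); have := frob2_ge0 ((X - Y) *m A2).
have := mulr_ge0 l1_ge0 (frob2_ge0 ((1%:M - P1) *m Y)).
have := frob2_ge0 (Y *m (1%:M - P2)).
move: J0; rewrite /J /objective -/Y => J0 g4 g3 g2 g1.
have /frob2_eq0 -> : frob2 ((X - Y) *m A2) = 0 by nra.
have /frob2_eq0 Y1P2 : frob2 (Y *m (1%:M - P2)) = 0 by nra.
by split=> //; apply/eqP; rewrite eq_sym -subr_eq0 -{1}(mulmx1 Y) -mulmxBr Y1P2.
Qed.

End Objective.

Theorem mainTheorem1 (R : realType) (m n r : nat)
  (X : 'M[R]_(m, n)) (U0 : 'M[R]_(m, r)) (V0 : 'M[R]_(n, r))
  (A1 : 'M[R]_(r, m)) (A2 : 'M[R]_(n, r))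
  (P1 : 'M[R]_m) (P2 : 'M[R]_n) (l1 l2 : R)
  (Ut : 'M[R]_(m, r)) (Vt : 'M[R]_(n, r)) :
  (r <= minn m n)%N ->
  X = U0 *m V0^T ->
  nonneg_mx U0 -> nonneg_mx V0 ->
  \rank U0 = r -> \rank V0 = r ->
  A1 *m X *m A2 \in unitmx ->
  0 < l1 -> 0 < l2 ->
  is_orth_proj P1 (X *m A2)^T ->
  is_orth_proj P2 (A1 *m X) ->
  nonneg_mx Ut -> nonneg_mx Vt ->
  (forall (U : 'M[R]_(m, r)) (V : 'M[R]_(n, r)),
      nonneg_mx U -> nonneg_mx V ->
      objective X A1 A2 P1 P2 l1 l2 Ut Vt <= objective X A1 A2 P1 P2 l1 l2 U V) ->
  X = Ut *m Vt^T.
Proof.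
move=> _ defX U0_ge0 V0_ge0 _ _ A1XA2_unit l1_gt0 l2_gt0 P1_proj P2_proj _ _ opt.
have [l1_ge0 l2_ge0] := (ltW l1_gt0, ltW l2_gt0).
have rkX : (\rank X <= \rank (A1 *m X *m A2))%N.
  by rewrite mxrank_unit // defX (leq_trans (mxrankM_maxl _ _)) ?rank_leq_col.
have XP2 : X *m P2 = X.
  apply: (orth_proj_fixr P2_proj); apply: submx_mull_rank.
  exact: leq_trans rkX (mxrankM_maxl _ _).
have P1X : P1 *m X = X.
  apply: (orth_proj_fixl P1_proj); rewrite trmx_mul; apply: submx_mull_rank.
  by rewrite -trmx_mul !mxrank_tr (leq_trans rkX) // -mulmxA mxrankM_maxr.
have J0 : objective X A1 A2 P1 P2 l1 l2 Ut Vt = 0.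
  apply/le_anti; rewrite objective_ge0 // andbT.
  rewrite -(objective_factor_eq0 A1 A2 l1 l2 P1X XP2 (esym defX)).
  exact: opt.
have [DA2 YP2] := objective_eq0 l1_ge0 l2_gt0 J0.
apply/eqP; rewrite -subr_eq0; apply/eqP.
apply: submx_mulmx_unit_eq0 A1XA2_unit DA2.
by apply: (orth_proj_fixrP P2_proj); rewrite mulmxBl XP2 YP2.
Qed.
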